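(* Under assumption (R), the function $\ell^{\mathrm{tr}}:[0,1]\times\mathbb R^d\times\mathbb S^d_+\to[0,+\infty]$ is nonnegative, is convex in $\Sigma_1\in\mathbb S^d_+$ for each fixed $(t,x)$, and is lower semicontinuous jointly in $(t,x,\Sigma_1)$.
   Context: Continuous reference data $\lambda_2:[0,1]\times\mathbb R^d\to(0,\infty)$, $\bar\Sigma_2:[0,1]\times\mathbb R^d\to\mathbb S^d_{++}$. Assumption (R): there are $0<\underline b\le\overline b<\infty$, $M>0$ with $\underline b\le\lambda_2\le\overline b$ and $\bar\Sigma_2\preceq MI_d$ everywhere. For $\Sigma_1\in\mathbb S^d_+$ let $\lambda_1:=\frac1d\mathrm{tr}(\bar\Sigma_2(t,x)^{-1}\Sigma_1)$ and, if $\Sigma_1\ne0$, $\bar\Sigma_1:=\Sigma_1/\lambda_1$. Define $\ell^{\mathrm{tr}}(t,x,\Sigma_1)=\lambda_1\log\frac{\lambda_1}{\lambda_2(t,x)}-\lambda_1+\lambda_2(t,x)-\frac{\lambda_1}2\log\det(\bar\Sigma_2(t,x)^{-1}\bar\Sigma_1)$ if $\Sigma_1\in\mathbb S^d_{++}$; $=\lambda_2(t,x)$ if $\Sigma_1=0$; $=+\infty$ if $\Sigma_1$ is singular and nonzero. *)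

From HB Require Import structures.
From mathcomp Require Import all_boot all_order all_algebra.
From mathcomp Require Import all_classical all_reals all_analysis.
Set Implicit Arguments. Unset Strict Implicit. Unset Printing Implicit Defensive.
Import Order.TTheory GRing.Theory Num.Theory.
Import numFieldNormedType.Exports.
Local Open Scope classical_set_scope.
Local Open Scope ring_scope.

Definition psdmx (R : realType) (d : nat) (A : 'M[R]_d) : Prop :=
  A^T = A /\ forall v : 'rV[R]_d, 0 <= (v *m A *m v^T) 0 0.

Definition pdmx (R : realType) (d : nat) (A : 'M[R]_d) : Prop :=
  A^T = A /\ forall v : 'rV[R]_d, v != 0 -> 0 < (v *m A *m v^T) 0 0.

Definition loewner_le (R : realType) (d : nat) (A B : 'M[R]_d) : Prop :=
  psdmx (B - A).

Definition lam1 (R : realType) (d : nat) (S2 S1 : 'M[R]_d) : R :=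
  (d%:R)^-1 * \tr (invmx S2 *m S1).

Definition ltr (R : realType) (d : nat)
  (lam2 : R -> 'rV[R]_d -> R) (Sig2 : R -> 'rV[R]_d -> 'M[R]_d)
  (t : R) (x : 'rV[R]_d) (S1 : 'M[R]_d) : \bar R :=
  let l2 := lam2 t x in
  let l1 := lam1 (Sig2 t x) S1 in
  if pselect (pdmx S1) then
    (l1 * ln (l1 / l2) - l1 + l2
      - l1 / 2%:R * ln (\det (invmx (Sig2 t x) *m (l1^-1 *: S1))))%:E
  else if pselect (S1 = 0) then l2%:E
  else +oo%E.

Definition lsc_on (T : topologicalType) (R : realType) (A : set T)
  (f : T -> \bar R) : Prop :=
  forall p, A p -> forall a : \bar R, (a < f p)%E ->
    \forall q \near within A (nbhs p), (a < f q)%E.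

(* l^tr(t, x, .) is the pointwise supremum, over u real and P positive definite, of
     G(u, P, S1) = u l1 - l2 e^(u-1) - l1 + l2 + (d l1 - tr (P S1) + l1 ln det (Sig2 P)) / 2,
   by Fenchel duality for l |-> l ln l and for -ln det, the latter resting on
   ln det Y <= tr Y - d for Y positive definite (Cholesky and 1 + a <= e^a).
   Each G(u, P, .) is affine and G is jointly continuous in (t, x, S1), so the
   supremum is convex and lower semicontinuous, and G(1, Sig2^-1, .) = 0 gives
   nonnegativity.  At S1 = 0 the supremum of l2 - l2 e^(u-1) is l2; at a singular
   nonzero S1, P = I + mu v^T v with v S1 = 0 and mu -> oo makes G unbounded,
   matching the value +oo. *)

From HB Require Import structures.
From mathcomp Require Import all_boot all_order all_algebra.
From mathcomp Require Import all_classical all_reals all_analysis.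
From mathcomp Require Import ring lra.
Import Order.TTheory GRing.Theory Num.Theory.
Import numFieldNormedType.Exports.
Local Open Scope classical_set_scope.
Local Open Scope ring_scope.
Set Implicit Arguments. Unset Strict Implicit. Unset Printing Implicit Defensive.

Section PositiveDefinite.
Variable R : realType.

Lemma pdmx_psdmx n (A : 'M[R]_n) : pdmx A -> psdmx A.
Proof.
move=> [sA hA]; split => // v; have [->|/hA/ltW//] := eqVneq v 0.
by rewrite !mul0mx mxE.
Qed.

Lemma pdmx_neq0 n (A : 'M[R]_n) : (0 < n)%N -> pdmx A -> A != 0.
Proof.
move=> n_gt0 [_ hA]; apply/eqP => A0.
have v0 : const_mx 1 != 0 :> 'rV[R]_n.
  by apply/eqP => /matrixP/(_ 0 (Ordinal n_gt0)); rewrite !mxE; apply/eqP/oner_neq0.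
by have := hA _ v0; rewrite A0 mulmx0 mul0mx mxE ltxx.
Qed.

Lemma pdmx_unitmx n (A : 'M[R]_n) : pdmx A -> A \in unitmx.
Proof.
move=> [_ hA]; rewrite unitmxE unitfE; apply/negP => /det0P [v v0 vA].
by have := hA v v0; rewrite vA mul0mx mxE ltxx.
Qed.

Lemma quad_congr n (A K : 'M[R]_n) (v : 'rV[R]_n) :
  v *m (K^T *m A *m K) *m v^T = (v *m K^T) *m A *m (v *m K^T)^T.
Proof. by rewrite trmx_mul trmxK !mulmxA. Qed.

Lemma psdmx_congr n (A K : 'M[R]_n) : psdmx A -> psdmx (K^T *m A *m K).
Proof.
move=> [sA hA]; split; first by rewrite !trmx_mul trmxK sA mulmxA.
by move=> v; rewrite quad_congr.
Qed.

Lemma pdmx_congr n (A K : 'M[R]_n) : pdmx A -> K \in unitmx -> pdmx (K^T *m A *m K).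
Proof.
move=> [sA hA] uK; split; first by rewrite !trmx_mul trmxK sA mulmxA.
move=> v v0; rewrite quad_congr; apply: hA; apply: contra v0 => /eqP vK0.
by rewrite -(mulmxK (_ : K^T \in unitmx) v) ?vK0 ?mul0mx // unitmx_tr.
Qed.

Lemma pdmx_inv n (A : 'M[R]_n) : pdmx A -> pdmx (invmx A).
Proof.
move=> hA; have uA := pdmx_unitmx hA; have [sA _] := hA.
have -> : invmx A = (invmx A)^T *m A *m invmx A.
  by rewrite trmx_inv sA -mulmxA mulmxV // mulmx1.
by apply: pdmx_congr; rewrite ?unitmx_inv.
Qed.

Lemma pdmxZ n (A : 'M[R]_n) k : 0 < k -> pdmx A -> pdmx (k *: A).
Proof.
move=> k_gt0 [sA hA]; split; first by rewrite linearZ /= sA.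
by move=> v v0; rewrite -scalemxAr -scalemxAl mxE mulr_gt0 // hA.
Qed.

Lemma psdmxZ n (A : 'M[R]_n) k : 0 <= k -> psdmx A -> psdmx (k *: A).
Proof.
move=> k_ge0 [sA hA]; split; first by rewrite linearZ /= sA.
by move=> v; rewrite -scalemxAr -scalemxAl mxE mulr_ge0.
Qed.

Lemma psdmxD n (A B : 'M[R]_n) : psdmx A -> psdmx B -> psdmx (A + B).
Proof.
move=> [sA hA] [sB hB]; split; first by rewrite linearD /= sA sB.
by move=> v; rewrite mulmxDr mulmxDl mxE addr_ge0.
Qed.

Lemma pdmxD_psd n (A B : 'M[R]_n) : pdmx A -> psdmx B -> pdmx (A + B).
Proof.
move=> [sA hA] [sB hB]; split; first by rewrite linearD /= sA sB.
by move=> v v0; rewrite mulmxDr mulmxDl mxE ltr_wpDr // hA.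
Qed.

Lemma mul_row_tr_gt0 n (v : 'rV[R]_n) : v != 0 -> 0 < (v *m v^T) 0 0.
Proof.
move=> v0; rewrite mxE lt_neqAle; apply/andP; split; last first.
  by apply: sumr_ge0 => j _; rewrite mxE -expr2 sqr_ge0.
apply: contra v0; rewrite eq_sym psumr_eq0 => [/allP v_eq0|j _]; last first.
  by rewrite mxE -expr2 sqr_ge0.
apply/eqP/rowP => j; have /implyP := v_eq0 j (mem_index_enum j).
by rewrite !mxE -expr2 sqrf_eq0 => /(_ isT)/eqP.
Qed.

Lemma pdmx1 n : pdmx (1%:M : 'M[R]_n).
Proof. by split=> [|v v0]; rewrite ?tr_scalar_mx // mulmx1 mul_row_tr_gt0. Qed.

Lemma psdmx_rank1 n (v : 'rV[R]_n) mu : 0 <= mu -> psdmx ((mu *: v^T) *m v).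
Proof.
move=> mu_ge0; rewrite -scalemxAl; apply: psdmxZ => //; split.
  by rewrite trmx_mul trmxK.
move=> w; have -> : w *m (v^T *m v) *m w^T = (w *m v^T) *m (w *m v^T)^T.
  by rewrite trmx_mul trmxK !mulmxA.
by rewrite mxE big_ord1 !mxE -expr2 sqr_ge0.
Qed.

Lemma linear_coef_eq0 (b g : R) : 0 <= g -> (forall e, 0 <= e * (2 * b + e * g)) -> b = 0.
Proof.
move=> g_ge0 h; set e := - b / (g + 1).
have eg : e * (g + 1) = - b by rewrite /e divfK // gt_eqF // ltr_pwDr.
have := h e; nra.
Qed.

Lemma psdmx_quad_eq0 n (S : 'M[R]_n) (v : 'rV[R]_n) :
  psdmx S -> (v *m S *m v^T) 0 0 = 0 -> v *m S = 0.
Proof.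
move=> [sS hS] q0; set w := v *m S.
have wSv : w *m S *m v^T = w *m w^T by rewrite /w trmx_mul sS !mulmxA.
have expand e : (v + e *: w) *m S *m (v + e *: w)^T
    = v *m S *m v^T + e *: (w *m w^T *+ 2 + e *: (w *m S *m w^T)).
  rewrite linearD linearZ /= !mulmxDl !mulmxDr -!scalemxAl -!scalemxAr wSv.
  by rewrite -/w scalerDr scalerA -scalerMnr !addrA.
have ww0 : (w *m w^T) 0 0 = 0.
  apply: linear_coef_eq0 (hS w) _ => e; have := hS (v + e *: w).
  by rewrite expand mxE q0 add0r !mxE mulr_natl mulr2n.
by have [//|/mul_row_tr_gt0] := eqVneq w 0; rewrite ww0 ltxx.
Qed.

Lemma psdmx_singular n (S : 'M[R]_n) :
  psdmx S -> ~ pdmx S -> exists2 v : 'rV[R]_n, v != 0 & v *m S = 0.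
Proof.
move=> hS; apply: contra_notP => no_kernel; split=> [|v v0]; first exact: hS.1.
rewrite lt_def hS.2 andbT; apply/eqP => /(psdmx_quad_eq0 hS) vS0.
by apply: no_kernel; exists v.
Qed.

Lemma pdmx_schur n (a : 'M[R]_1) (b : 'rV[R]_n) (C : 'M[R]_n) :
  pdmx (block_mx a b b^T C) -> 0 < a 0 0 /\ pdmx (C - (a 0 0)^-1 *: (b^T *m b)).
Proof.
set al := a 0 0; have ea : a = al%:M by rewrite [a]mx11_scalar.
move=> [sA hA]; have [_ _ _ sC] := eq_block_mx (etrans (esym (tr_block_mx _ _ _ _)) sA).
have a_gt0 : 0 < al.
  have /hA : row_mx 1 0 != 0 :> 'rV[R]_(1 + n) by rewrite row_mx_eq0 oner_eq0.
  rewrite mul_row_block tr_row_mx mul_row_col !mul1mx !mul0mx !addr0 trmx0.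
  by rewrite mulmx0 addr0 trmx1 mulmx1.
split=> //; split=> [|v v0].
  by rewrite linearB /= sC linearZ /= trmx_mul trmxK.
pose z := row_mx (- al^-1 *: (v *m b^T)) v.
have /hA : z != 0 by rewrite row_mx_eq0 negb_and v0 orbT.
have -> : z *m block_mx a b b^T C = row_mx 0 (v *m (C - al^-1 *: (b^T *m b))).
  rewrite mul_row_block ea mul_mx_scalar scalerA mulrN mulfV ?gt_eqF //.
  rewrite scaleN1r addNr; congr row_mx.
  by rewrite mulmxBr -scalemxAl -scalemxAr mulmxA scaleNr addrC.
by rewrite tr_row_mx mul_row_col mul0mx add0r.
Qed.

Lemma cholesky n (A : 'M[R]_n) :
  pdmx A -> exists2 K : 'M[R]_n, is_trig_mx K & A = K *m K^T.
Proof.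
elim: n A => [|n IH] A hA.
  by exists 0; [exact: mx0_is_trig | apply/matrixP => -[]].
move: A hA; rewrite -[n.+1]/(1 + n)%N => A hA.
set a := ulsubmx A; set b := ursubmx A; set C := drsubmx A.
have eA : A = block_mx a b b^T C by rewrite trmx_ursub hA.1 submxK.
move: hA; rewrite eA => /pdmx_schur [a_gt0 /IH [K' trig_K' eK']].
set s := Num.sqrt (a 0 0); have s_gt0 : 0 < s by rewrite sqrtr_gt0.
exists (block_mx s%:M 0 (s^-1 *: b^T) K').
  by rewrite is_trig_block_mx // eqxx scalar_mx_is_trig.
rewrite tr_block_mx mulmx_block trmx0 mulmx0 mul0mx !addr0.
rewrite tr_scalar_mx -scalar_mxM -expr2 sqr_sqrtr ?ltW // -mx11_scalar.
rewrite linearZ /= trmxK mul_mx_scalar mul_scalar_mx !scalerA mulfV ?gt_eqF //.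
rewrite scale1r mulmx0 addr0 -scalemxAl -scalemxAr scalerA -expr2 exprVn.
by rewrite sqr_sqrtr ?ltW // -eK' scale1r addrC subrK.
Qed.

Lemma pdmx_unit_factor n (P : 'M[R]_n) :
  pdmx P -> exists2 K : 'M[R]_n, K \in unitmx & P = K *m K^T.
Proof.
move=> hP; have [K _ eP] := cholesky hP; exists K => //.
by have := pdmx_unitmx hP; rewrite eP unitmx_mul => /andP[].
Qed.

Lemma mxtrace_mul_factor n (K X : 'M[R]_n) : \tr (K *m K^T *m X) = \tr (K^T *m X *m K).
Proof. by rewrite -mulmxA mxtrace_mulC. Qed.

Lemma pdmx_det_gt0 n (A : 'M[R]_n) : pdmx A -> 0 < \det A.
Proof.
move=> hA; have [K uK ->] := pdmx_unit_factor hA.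
by rewrite det_mulmx det_tr -expr2 lt0r sqr_ge0 sqrf_eq0 -unitfE -unitmxE uK.
Qed.

Lemma pdmx_det_le_expR n (A : 'M[R]_n) : pdmx A -> \det A <= expR (\tr A - n%:R).
Proof.
move=> hA; have [K trig_K eA] := cholesky hA.
have -> : \det A = \prod_i (K i i ^+ 2).
  by rewrite eA det_mulmx det_tr -expr2 (det_trig trig_K) prodrXl.
apply: (@le_trans _ _ (\prod_i expR (K i i ^+ 2 - 1))).
  apply: ler_prod => i _; rewrite sqr_ge0 /=.
  by have := expR_ge1Dx (K i i ^+ 2 - 1); rewrite addrC subrK.
rewrite -expR_sum ler_expR sumrB sumr_const card_ord lerB // /mxtrace eA.
apply: ler_sum => i _; rewrite mxE (bigD1 i) //= mxE -expr2 lerDl.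
by apply: sumr_ge0 => j _; rewrite mxE -expr2 sqr_ge0.
Qed.

Lemma det_mul_pdmx_gt0 n (P X : 'M[R]_n) : pdmx P -> pdmx X -> 0 < \det (P *m X).
Proof. by move=> hP hX; rewrite det_mulmx mulr_gt0 ?pdmx_det_gt0. Qed.

Lemma ln_det_mul_le n (P X : 'M[R]_n) :
  pdmx P -> pdmx X -> ln (\det (P *m X)) <= \tr (P *m X) - n%:R.
Proof.
move=> hP hX; have [K uK eP] := pdmx_unit_factor hP.
have -> : \det (P *m X) = \det (K^T *m X *m K).
  by rewrite eP !det_mulmx det_tr mulrAC.
rewrite eP mxtrace_mul_factor -ler_expR lnK ?posrE.
  exact/pdmx_det_le_expR/pdmx_congr.
exact/pdmx_det_gt0/pdmx_congr.
Qed.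

Lemma psdmx_diag_ge0 n (Y : 'M[R]_n) i : psdmx Y -> 0 <= Y i i.
Proof. by move=> [_ /(_ (delta_mx 0 i))]; rewrite -rowE trmx_delta -colE !mxE. Qed.

Lemma psdmx_mxtrace_eq0 n (Y : 'M[R]_n) : psdmx Y -> \tr Y = 0 -> Y = 0.
Proof.
move=> hY /eqP; rewrite psumr_eq0 => [/allP Y_diag0|i _]; last exact: psdmx_diag_ge0.
apply/row_matrixP => i; rewrite rowE row0; apply: psdmx_quad_eq0 => //.
have /implyP/(_ isT)/eqP := Y_diag0 i (mem_index_enum i).
by rewrite -rowE trmx_delta -colE !mxE.
Qed.

Lemma mxtrace_mul_psdmx_ge0 n (P S : 'M[R]_n) : pdmx P -> psdmx S -> 0 <= \tr (P *m S).
Proof.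
move=> hP hS; have [K _ ->] := pdmx_unit_factor hP; rewrite mxtrace_mul_factor.
by apply: sumr_ge0 => i _; apply/psdmx_diag_ge0/psdmx_congr.
Qed.

Lemma mxtrace_mul_psdmx_eq0 n (P S : 'M[R]_n) :
  pdmx P -> psdmx S -> \tr (P *m S) = 0 -> S = 0.
Proof.
move=> hP hS; have [K uK ->] := pdmx_unit_factor hP; rewrite mxtrace_mul_factor.
move=> /(psdmx_mxtrace_eq0 (psdmx_congr K hS)) Y0.
have uKT : K^T \in unitmx by rewrite unitmx_tr.
by rewrite -(mulmxK uK S) -(mulKmx uKT S) -[invmx _ *m _ *m K]mulmxA Y0 mulmx0 mul0mx.
Qed.

Lemma det_rank1_update n (v : 'rV[R]_n) (mu : R) :
  \det (1%:M + (mu *: v^T) *m v) = 1 + mu * (v *m v^T) 0 0.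
Proof.
set w := mu *: v^T.
have e1 : block_mx 1%:M (- v) w 1%:M
    = block_mx 1%:M 0 w 1%:M *m block_mx 1%:M (- v) 0 (1%:M + w *m v).
  rewrite mulmx_block ?mul1mx ?mul0mx ?mulmx1 ?mulmx0 ?addr0 ?add0r.
  by rewrite mulmxN addrCA addNr addr0.
have e2 : block_mx 1%:M (- v) w 1%:M
    = block_mx (1%:M + v *m w) (- v) 0 1%:M *m block_mx 1%:M 0 w 1%:M.
  rewrite mulmx_block ?mul1mx ?mul0mx ?mulmx1 ?mulmx0 ?addr0 ?add0r.
  by rewrite mulNmx addrK.
have := congr1 determinant e2; rewrite {1}e1 !det_mulmx det_lblock !det_ublock.
rewrite !det1 !mul1r !mulr1 => ->.
by rewrite det_mx11 /w -scalemxAr !mxE eqxx mulr1n.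
Qed.

End PositiveDefinite.

Lemma lee_real_lt (R : realDomainType) (x y : \bar R) :
  (forall r : R, (r%:E < x)%E -> (r%:E < y)%E) -> (x <= y)%E.
Proof.
move=> h; rewrite leNgt; apply/negP => yx.
case: y yx h => [t| |] yx h.
- by have := h t yx; rewrite ltxx.
- by rewrite ltNge leey in yx.
- case: x yx h => [s| |] // _ h.
    by have := h (s - 1); rewrite lte_fin gtrBl ltr01 ltNge leNye => /(_ isT).
  by have := h 0 (ltry 0); rewrite ltNge leNye.
Qed.

Lemma expR_young (R : realType) (l c u : R) : 0 < l -> 0 < c ->
  l * u - c * expR (u - 1) <= l * ln (l / c).
Proof.
move=> l_gt0 c_gt0; have lc_gt0 : 0 < l / c by rewrite divr_gt0.
set x := u - 1 - ln (l / c).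
have -> : c * expR (u - 1) = l * expR x.
  rewrite /x [in RHS]expRD expRN lnK ?posrE // invf_div.
  by field; rewrite gt_eqF.
have := ler_wpM2l (ltW l_gt0) (expR_ge1Dx x); rewrite /x; lra.
Qed.

Section Variational.
Variables (R : realType) (d : nat).
Hypothesis d_gt0 : (0 < d)%N.
Implicit Types (B P S : 'M[R]_d) (c u : R).

Definition ltr_fin B c S : R :=
  let l := lam1 B S in
  l * ln (l / c) - l + c - l / 2%:R * ln (\det (invmx B *m (l^-1 *: S))).

Definition ltr_at B c S : \bar R :=
  if pselect (pdmx S) then (ltr_fin B c S)%:E
  else if pselect (S = 0) then c%:E else +oo%E.

Definition ltr_minorant B c u P S : R :=
  let l := lam1 B S in
  u * l - c * expR (u - 1) - l + c
  + 2%:R^-1 * (d%:R * l - \tr (P *m S) + l * ln (\det (B *m P))).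

Lemma lam1_gt0 B S : pdmx B -> psdmx S -> S != 0 -> 0 < lam1 B S.
Proof.
move=> hB hS S0; rewrite /lam1 pmulr_rgt0 ?invr_gt0 ?ltr0n // lt_def.
rewrite (mxtrace_mul_psdmx_ge0 (pdmx_inv hB) hS) andbT.
by apply: contra S0 => /eqP/(mxtrace_mul_psdmx_eq0 (pdmx_inv hB) hS) ->.
Qed.

Lemma lam1_gt0_pd B S : pdmx B -> pdmx S -> 0 < lam1 B S.
Proof. by move=> hB hS; apply: lam1_gt0 => //; [exact: pdmx_psdmx | exact: pdmx_neq0]. Qed.

Lemma ltr_minorant_comb B c u P S S' th :
  ltr_minorant B c u P (th *: S + (1 - th) *: S')
  = th * ltr_minorant B c u P S + (1 - th) * ltr_minorant B c u P S'.
Proof.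
rewrite /ltr_minorant /lam1 !mulmxDr -!scalemxAr !mxtraceD !mxtraceZ; ring.
Qed.

Lemma ltr_minorant0 B c u P : ltr_minorant B c u P 0 = c - c * expR (u - 1).
Proof. by rewrite /ltr_minorant /lam1 !mulmx0 mxtrace0 !mulr0; ring. Qed.

Lemma ltr_minorant_inv B c S : pdmx B -> ltr_minorant B c 1 (invmx B) S = 0.
Proof.
move=> hB; rewrite /ltr_minorant mulmxV ?pdmx_unitmx // det1 ln1 subrr expR0.
by rewrite /lam1; field; rewrite pnatr_eq0 -lt0n.
Qed.

Lemma ltr_minorant_le_fin B c u P S : pdmx B -> 0 < c -> pdmx P -> pdmx S ->
  ltr_minorant B c u P S <= ltr_fin B c S.
Proof.
move=> hB c_gt0 hP hS; rewrite /ltr_minorant /ltr_fin; set l := lam1 B S.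
have l_gt0 : 0 < l := lam1_gt0_pd hB hS.
set X := l^-1 *: S; have hX : pdmx X by apply: pdmxZ; rewrite ?invr_gt0.
have detB0 : \det B != 0 by rewrite gt_eqF ?pdmx_det_gt0.
have detE : \det (invmx B *m X) * \det (B *m P) = \det (P *m X).
  by rewrite !det_mulmx det_inv; field.
have lnE : ln (\det (invmx B *m X)) = ln (\det (P *m X)) - ln (\det (B *m P)).
  have := det_mul_pdmx_gt0 (pdmx_inv hB) hX; have := det_mul_pdmx_gt0 hB hP.
  by rewrite -detE => ? ?; rewrite lnM ?posrE // addrK.
have trE : \tr (P *m S) = l * \tr (P *m X).
  by rewrite -scalemxAr mxtraceZ mulrA mulfV ?gt_eqF ?mul1r.
have := expR_young u l_gt0 c_gt0.
have := ler_wpM2l (ltW l_gt0) (ln_det_mul_le hP hX).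
rewrite lnE trE; lra.
Qed.

Lemma ltr_at_pd B c S : pdmx S -> ltr_at B c S = (ltr_fin B c S)%:E.
Proof. by rewrite /ltr_at; case: pselect. Qed.

Lemma ltr_at0 B c : ltr_at B c 0 = c%:E.
Proof.
rewrite /ltr_at; case: (pselect (pdmx (0 : 'M[R]_d))) => [pd0|npd0].
  by have := pdmx_neq0 d_gt0 pd0; rewrite eqxx.
by case: pselect.
Qed.

Lemma ltr_at_singular B c S : ~ pdmx S -> S != 0 -> ltr_at B c S = +oo%E.
Proof. by rewrite /ltr_at => ? /eqP ?; do 2 case: pselect => //. Qed.

Lemma ltr_minorant_le B c u P S : pdmx B -> 0 < c -> pdmx P ->
  ((ltr_minorant B c u P S)%:E <= ltr_at B c S)%E.
Proof.
move=> hB c_gt0 hP; have [hS|npdS] := pselect (pdmx S).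
  by rewrite ltr_at_pd // lee_fin ltr_minorant_le_fin.
have [->|S0] := eqVneq S 0; last by rewrite ltr_at_singular ?leey.
by rewrite ltr_at0 ltr_minorant0 lee_fin gerBl mulr_ge0 ?expR_ge0 ?ltW.
Qed.

Lemma ltr_at_ge0 B c S : pdmx B -> 0 < c -> (0 <= ltr_at B c S)%E.
Proof.
move=> hB c_gt0; have := ltr_minorant_le 1 S hB c_gt0 (pdmx_inv hB).
by rewrite ltr_minorant_inv.
Qed.

Lemma ltr_minorant_opt B c S : pdmx B -> 0 < c -> pdmx S ->
  let l := lam1 B S in ltr_minorant B c (1 + ln (l / c)) (l *: invmx S) S = ltr_fin B c S.
Proof.
move=> hB c_gt0 hS l; have l_gt0 : 0 < l := lam1_gt0_pd hB hS.
have detE : \det (invmx B *m (l^-1 *: S)) = (\det (B *m (l *: invmx S)))^-1.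
  have dB : \det B != 0 by rewrite gt_eqF ?pdmx_det_gt0.
  have dS : \det S != 0 by rewrite gt_eqF ?pdmx_det_gt0.
  rewrite !det_mulmx !detZ !det_inv exprVn; field.
  by rewrite dB dS expf_neq0 // gt_eqF.
have := det_mul_pdmx_gt0 hB (pdmxZ l_gt0 (pdmx_inv hS)).
rewrite /ltr_minorant /ltr_fin -/l detE => det_gt0; rewrite lnV ?posrE //.
rewrite [1 + _ - 1]addrAC subrr add0r lnK ?posrE ?divr_gt0 //.
rewrite -scalemxAl mulVmx ?pdmx_unitmx // mxtraceZ mxtrace1.
by field; rewrite gt_eqF.
Qed.

Lemma ltr_minorant_singular B c S (v : 'rV[R]_d) r : pdmx B -> psdmx S -> S != 0 ->
  v != 0 -> v *m S = 0 -> exists2 P, pdmx P & r < ltr_minorant B c 1 P S.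
Proof.
move=> hB hS S0 v0 vS0; set l := lam1 B S; have l_gt0 : 0 < l := lam1_gt0 hB hS S0.
have s_gt0 := mul_row_tr_gt0 v0; set s := (v *m v^T) 0 0 in s_gt0.
set K := (2 * r - d%:R * l + \tr S) / l - ln (\det B).
(* Adding a multiple of v^T v to P leaves tr (P S) unchanged but inflates det (B P). *)
set P := 1%:M + ((expR K / s) *: v^T) *m v.
have trE : \tr (P *m S) = \tr S.
  by rewrite mulmxDl mul1mx mxtraceD -mulmxA vS0 mulmx0 mxtrace0 addr0.
have detE : \det (B *m P) = \det B * (1 + expR K).
  by rewrite det_mulmx det_rank1_update -/s divfK ?gt_eqF.
have K_lt : K < ln (1 + expR K).
  by rewrite -{1}(expRK K) ltr_ln ?posrE ?addr_gt0 ?expR_gt0 //; lra.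
have lK : l * K = 2 * r - d%:R * l + \tr S - l * ln (\det B).
  by rewrite /K; field; rewrite gt_eqF.
exists P.
  by apply: pdmxD_psd; [exact: pdmx1 | apply: psdmx_rank1; rewrite divr_ge0 ?expR_ge0 ?ltW].
rewrite /ltr_minorant -/l subrr expR0 mulr1 mul1r trE detE.
rewrite lnM ?posrE ?pdmx_det_gt0 ?addr_gt0 ?expR_gt0 //.
have := K_lt; rewrite -(ltr_pM2l l_gt0); lra.
Qed.

Lemma ltr_at_sup_minorant B c S r : pdmx B -> 0 < c -> psdmx S -> (r%:E < ltr_at B c S)%E ->
  exists u P, pdmx P /\ r < ltr_minorant B c u P S.
Proof.
move=> hB c_gt0 hS; have [pdS|npdS] := pselect (pdmx S).
  rewrite ltr_at_pd // lte_fin -(ltr_minorant_opt hB c_gt0 pdS) => r_lt.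
  exists (1 + ln (lam1 B S / c)), (lam1 B S *: invmx S); split => //.
  by apply: pdmxZ; [exact: lam1_gt0_pd | exact: pdmx_inv].
have [->|S0] := eqVneq S 0.
  rewrite ltr_at0 lte_fin => r_lt_c; set k := (c - r) / (2 * c).
  have k_gt0 : 0 < k by rewrite divr_gt0 ?subr_gt0 ?mulr_gt0.
  exists (1 + ln k), 1%:M; split; first exact: pdmx1.
  rewrite ltr_minorant0 [1 + _ - 1]addrAC subrr add0r lnK ?posrE //.
  have -> : c * k = (c - r) / 2 by rewrite /k; field; rewrite gt_eqF.
  lra.
have [v v0 vS0] := psdmx_singular hS npdS.
have [P hP r_lt] := ltr_minorant_singular c r hB hS S0 v0 vS0.
by exists 1, P.
Qed.

Lemma ltr_at_convex B c S S' th : pdmx B -> 0 < c -> psdmx S -> psdmx S' -> 0 <= th <= 1 ->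
  (ltr_at B c (th *: S + (1 - th) *: S')
     <= th%:E * ltr_at B c S + (1 - th)%:E * ltr_at B c S')%E.
Proof.
move=> hB c_gt0 hS hS' /andP[th_ge0 th_le1].
have hC : psdmx (th *: S + (1 - th) *: S').
  by apply: psdmxD; apply: psdmxZ; rewrite ?subr_ge0.
apply: lee_real_lt => r /(ltr_at_sup_minorant hB c_gt0 hC) [u [P [hP r_lt]]].
apply: (@lt_le_trans _ _ (ltr_minorant B c u P (th *: S + (1 - th) *: S'))%:E).
  by rewrite lte_fin.
rewrite ltr_minorant_comb EFinD !EFinM.
by apply: leeD; apply: lee_wpmul2l; rewrite ?lee_fin ?subr_ge0 ?ltr_minorant_le.
Qed.

End Variational.

Section EntrywiseConvergence.
Variables (R : realType) (T : Type) (F : set_system T).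
Hypothesis FF : Filter F.

Definition mx_cvg m n (f : T -> 'M[R]_(m, n)) (A : 'M[R]_(m, n)) :=
  forall i j, f q i j @[q --> F] --> A i j.

Lemma mx_cvgW m n (f : T -> 'M[R]_(m, n)) A : f @ F --> A -> mx_cvg f A.
Proof. by move=> f_cvg i j; apply: cvg_comp f_cvg (@coord_continuous R _ _ i j A). Qed.

Lemma mx_cvg_cst m n (A : 'M[R]_(m, n)) : mx_cvg (fun=> A) A.
Proof. by move=> i j; exact: cvg_cst. Qed.

Lemma cvg_sumr (I : Type) (r : seq I) (P : pred I) (g : I -> T -> R) (l : I -> R) :
  (forall i, P i -> g i q @[q --> F] --> l i) ->
  \sum_(i <- r | P i) g i q @[q --> F] --> \sum_(i <- r | P i) l i.
Proof. by move=> g_cvg; apply: cvg_big => //; exact: add_continuous. Qed.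

Lemma cvg_prodr (I : Type) (r : seq I) (P : pred I) (g : I -> T -> R) (l : I -> R) :
  (forall i, P i -> g i q @[q --> F] --> l i) ->
  \prod_(i <- r | P i) g i q @[q --> F] --> \prod_(i <- r | P i) l i.
Proof. by move=> g_cvg; apply: cvg_big => //; exact: mul_continuous. Qed.

Lemma mx_cvg_mul m n p (f : T -> 'M[R]_(m, n)) (g : T -> 'M[R]_(n, p)) A B :
  mx_cvg f A -> mx_cvg g B -> mx_cvg (fun q => f q *m g q) (A *m B).
Proof.
move=> f_cvg g_cvg i j; rewrite mxE; under eq_cvg do rewrite mxE.
by apply: cvg_sumr => k _; apply: cvgM.
Qed.

Lemma cvg_mxtrace n (f : T -> 'M[R]_n) A : mx_cvg f A -> \tr (f q) @[q --> F] --> \tr A.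
Proof. by move=> f_cvg; apply: cvg_sumr => i _; exact: f_cvg. Qed.

Lemma cvg_det n (f : T -> 'M[R]_n) A : mx_cvg f A -> \det (f q) @[q --> F] --> \det A.
Proof.
move=> f_cvg; apply: cvg_sumr => s _; apply: cvgM; first exact: cvg_cst.
by apply: cvg_prodr => i _; exact: f_cvg.
Qed.

Lemma mx_cvg_inv n (f : T -> 'M[R]_n) A : A \in unitmx -> mx_cvg f A ->
  mx_cvg (fun q => invmx (f q)) (invmx A).
Proof.
move=> uA f_cvg i j; have detA0 : \det A != 0 by rewrite -unitfE -unitmxE.
have near_unit : \forall q \near F, f q \in unitmx.
  have detA_gt0 : 0 < `|\det A| by rewrite normr_gt0.
  apply: filterS (cvgr_gt _ (cvg_norm (cvg_det f_cvg)) _ detA_gt0) => q.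
  by rewrite unitmxE unitfE normr_gt0.
have adj_cvg : (\det (f q))^-1 * \adj (f q) i j @[q --> F] --> invmx A i j.
  rewrite /invmx uA mxE; apply: cvgM; first exact: cvgV (cvg_det f_cvg).
  rewrite mxE; under eq_cvg do rewrite mxE.
  apply: cvgM; first exact: cvg_cst.
  by apply: cvg_det => a b; rewrite !mxE; under eq_cvg do rewrite !mxE; exact: f_cvg.
apply: cvg_trans adj_cvg; apply: near_eq_cvg; apply: filterS near_unit => q uf.
by rewrite /invmx uf !mxE.
Qed.

End EntrywiseConvergence.

Lemma ltr_minorant_cvg (R : realType) (d : nat) (T : Type) (F : set_system T)
    (FF : Filter F) (B_ S_ : T -> 'M[R]_d) (c_ : T -> R) B S c u P :
  pdmx B -> pdmx P -> mx_cvg F B_ B -> c_ q @[q --> F] --> c -> mx_cvg F S_ S ->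
  ltr_minorant (B_ q) (c_ q) u P (S_ q) @[q --> F] --> ltr_minorant B c u P S.
Proof.
move=> hB hP B_cvg c_cvg S_cvg.
have lam1_cvg : lam1 (B_ q) (S_ q) @[q --> F] --> lam1 B S.
  apply: cvgM; first exact: cvg_cst.
  apply: cvg_mxtrace; apply: mx_cvg_mul S_cvg.
  by apply: mx_cvg_inv B_cvg; exact: pdmx_unitmx.
have tr_cvg : \tr (P *m S_ q) @[q --> F] --> \tr (P *m S).
  by apply: cvg_mxtrace; apply: mx_cvg_mul S_cvg; exact: mx_cvg_cst.
have lndet_cvg : ln (\det (B_ q *m P)) @[q --> F] --> ln (\det (B *m P)).
  have det_cvg : \det (B_ q *m P) @[q --> F] --> \det (B *m P).
    by apply: cvg_det; apply: mx_cvg_mul B_cvg _; exact: mx_cvg_cst.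
  exact: cvg_comp _ _ det_cvg (continuous_ln (det_mul_pdmx_gt0 hB hP)).
apply: cvgD; last first.
  apply: cvgM; first exact: cvg_cst.
  by apply: cvgD; [apply: cvgB => //; apply: cvgM => //; exact: cvg_cst | exact: cvgM].
apply: cvgD => //; apply: cvgB => //; apply: cvgB; apply: cvgM => //; exact: cvg_cst.
Qed.

Lemma lsc_on_continuous_minorants (T : topologicalType) (R : realType) (A : set T)
    (f : T -> \bar R) :
  (forall p, A p -> forall r : R, (r%:E < f p)%E ->
     exists2 g : T -> R, g q @[q --> within A (nbhs p)] --> g p
       & r < g p /\ forall q, A q -> ((g q)%:E <= f q)%E) ->
  lsc_on A f.
Proof.
move=> minorants p Ap.
have lsc_real r : (r%:E < f p)%E -> \forall q \near within A (nbhs p), (r%:E < f q)%E.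
  move=> /(minorants p Ap) [g g_cvg [r_lt g_le]].
  near=> q; have Aq : A q by near: q; exact: withinT.
  apply: lt_le_trans (g_le q Aq); rewrite lte_fin; near: q.
  exact: cvgr_gt g_cvg _ r_lt.
case=> [r| |] a_lt; first exact: lsc_real.
  by rewrite ltNge leey in a_lt.
have [r r_lt] : exists r : R, (r%:E < f p)%E.
  case: (f p) a_lt => [s _| _ |//]; first by exists (s - 1); rewrite lte_fin gtrBl.
  by exists 0; rewrite ltry.
by apply: filterS (lsc_real r r_lt) => q; apply: lt_trans; rewrite ltNyr.
Unshelve. all: by end_near.
Qed.

Lemma cvg_within_fst (U V W : topologicalType) (A : set (U * V)) (B : set U)
    (h : U -> W) (p : U * V) :
  (forall q, A q -> B q.1) -> B p.1 -> {within B, continuous h} ->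
  h q.1 @[q --> within A (nbhs p)] --> h p.1.
Proof.
move=> AB Bp /subspace_continuousP /(_ p.1 Bp) h_cvg.
have fst_cvg : q.1 @[q --> within A (nbhs p)] --> within B (nbhs p.1).
  move=> W1 W1p; rewrite /within /=.
  have fst_W1 : nbhs p (fun q : U * V => B q.1 -> W1 q.1).
    exact: (@cvg_fst _ _ (nbhs p.1) (nbhs p.2) _ _ W1p).
  by apply: filterS fst_W1 => q W1q /AB; apply: W1q.
exact: cvg_comp _ _ fst_cvg h_cvg.
Qed.

Theorem mainTheorem10 (R : realType) (d : nat) (hd : (0 < d)%N)
  (lam2 : R -> 'rV[R]_d -> R) (Sig2 : R -> 'rV[R]_d -> 'M[R]_d)
  (lb ub M : R)
  (lam2_cont : {within [set p : R * 'rV[R]_d | 0 <= p.1 <= 1],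
                 continuous (fun p => lam2 p.1 p.2)})
  (Sig2_cont : {within [set p : R * 'rV[R]_d | 0 <= p.1 <= 1],
                 continuous (fun p => Sig2 p.1 p.2)})
  (Sig2_pd : forall t x, 0 <= t <= 1 -> pdmx (Sig2 t x))
  (hlb : 0 < lb) (hlbub : lb <= ub) (hM : 0 < M)
  (lam2_bd : forall t x, 0 <= t <= 1 -> lb <= lam2 t x <= ub)
  (Sig2_bd : forall t x, 0 <= t <= 1 -> loewner_le (Sig2 t x) (M%:M)) :
  (forall t x S1, 0 <= t <= 1 -> psdmx S1 -> (0 <= ltr lam2 Sig2 t x S1)%E)
  /\
  (forall t x, 0 <= t <= 1 ->
     forall S S' (th : R), psdmx S -> psdmx S' -> 0 <= th <= 1 ->
     (ltr lam2 Sig2 t x (th *: S + (1 - th) *: S')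
        <= th%:E * ltr lam2 Sig2 t x S + (1 - th)%:E * ltr lam2 Sig2 t x S')%E)
  /\
  lsc_on [set p : R * 'rV[R]_d * 'M[R]_d | 0 <= p.1.1 <= 1 /\ psdmx p.2]
         (fun p => ltr lam2 Sig2 p.1.1 p.1.2 p.2).
Proof.
have ltrE t x S : ltr lam2 Sig2 t x S = ltr_at (Sig2 t x) (lam2 t x) S by [].
have lam2_gt0 t x : 0 <= t <= 1 -> 0 < lam2 t x.
  by move=> /(lam2_bd _ x) /andP[lb_le _]; exact: lt_le_trans lb_le.
split; [|split].
- move=> t x S1 ht _; rewrite ltrE.
  by apply: (ltr_at_ge0 hd); [exact: Sig2_pd | exact: lam2_gt0].
- move=> t x ht S S' th hS hS' hth; rewrite !ltrE.
  by apply: (ltr_at_convex hd) => //; [exact: Sig2_pd | exact: lam2_gt0].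
apply: lsc_on_continuous_minorants => -[[t x] S] [/= ht hS] r.
rewrite ltrE => /(ltr_at_sup_minorant hd (Sig2_pd t x ht) (lam2_gt0 t x ht) hS) [u [P [hP r_lt]]].
exists (fun q => ltr_minorant (Sig2 q.1.1 q.1.2) (lam2 q.1.1 q.1.2) u P q.2); last first.
  split=> // q [hq _].
  by apply: (ltr_minorant_le hd); [exact: Sig2_pd | exact: lam2_gt0 | exact: hP].
have dom_fst (q : R * 'rV[R]_d * 'M[R]_d) :
    0 <= q.1.1 <= 1 /\ psdmx q.2 -> [set p : R * 'rV[R]_d | 0 <= p.1 <= 1] q.1 by case.
apply: ltr_minorant_cvg; [exact: Sig2_pd | exact: hP | | |].
- apply: mx_cvgW.
  exact: (cvg_within_fst (h := fun p => Sig2 p.1 p.2) (p := (t, x, S)) dom_fst ht Sig2_cont).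
- exact: (cvg_within_fst (h := fun p => lam2 p.1 p.2) (p := (t, x, S)) dom_fst ht lam2_cont).
- by apply: mx_cvgW; apply: cvg_within_filter; exact: cvg_snd.
Qed.
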